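(* Let $P_0$ be a domain, $U$ a free $P_0$-module of rank four with dual $U^*=\operatorname{Hom}_{P_0}(U,P_0)$, and $x,y,z,w$ a basis of $U$ with dual basis $x^*,y^*,z^*,w^*$. Let $$\phi_3=ax^{*(2)}y^*+dx^*y^{*(2)}+ey^{*(2)}z^*+fy^{*(2)}w^*+hy^*z^{*(2)}+iz^{*(2)}w^*+ky^*w^{*(2)}+mx^*y^*z^*+nx^*y^*w^*+py^*z^*w^*\in D_3U^*$$ with parameters in $P_0$. Assume (a) $a\neq0$ in $P_0$, and (b) $\ell\phi_3\neq0$ for all nonzero $\ell\in U$. Then $\Gamma_{\phi_3}$ is not identically zero.
   Context: $D_iU^*=\operatorname{Hom}_{P_0}(\operatorname{Sym}_iU,P_0)$; $D_\bullet U^*$ is the divided power algebra, a module over $\operatorname{Sym}_\bullet U$ via $(uv)(u')=v(uu')$. The divided power monomial $x^{*(a_1)}y^{*(a_2)}z^{*(a_3)}w^{*(a_4)}$ takes value $1$ on $x^{a_1}y^{a_2}z^{a_3}w^{a_4}$ and $0$ on all other monomials of that degree; a factor without parenthesized exponent has exponent one. $D_4U$ is the degree-$4$ divided power of $U$. For $X\in D_4U$, $\Delta(X)\in U^{\otimes4}$ is its comultiplication: for $X=\ell_1^{(e_1)}\cdots\ell_s^{(e_s)}$ with $\sum e_j=4$, the sum of all distinct words $u_1\otimes\cdots\otimes u_4$ in which the symbol $\ell_j$ occurs exactly $e_j$ times, extended linearly. $\Gamma_{\phi_3}:D_4U\otimes\bigwedge^4U\to\bigwedge^4U^*$ is the $P_0$-linear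 map $\Gamma_{\phi_3}(X\otimes y_1\wedge\cdots\wedge y_4)=\sum(u_1y_1\phi_3)\wedge\cdots\wedge(u_4y_4\phi_3)$, summed over the terms of $\Delta(X)$. *)

(* U = P_0^4 via the basis x,y,z,w (indices 0,1,2,3). *)
From mathcomp Require Import all_boot all_algebra.
Set Implicit Arguments. Unset Strict Implicit. Unset Printing Implicit Defensive.
Import GRing.Theory.
Local Open Scope ring_scope.

(* Monomials in Sym U: exponent vectors over the basis x,y,z,w. *)
Definition mono := 'I_4 -> nat.
Definition mdeg (mo : mono) : nat := (\sum_(j < 4) mo j)%N.
Definition unitm (j : 'I_4) : mono := fun k => nat_of_bool (k == j).
Definition maddm (m1 m2 : mono) : mono := fun k => (m1 k + m2 k)%N.
Definition expo (mo : mono) : nat * nat * nat * nat :=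
  (mo (@Ordinal 4 0 isT), mo (@Ordinal 4 1 isT),
   mo (@Ordinal 4 2 isT), mo (@Ordinal 4 3 isT)).

Section Forms.
Variable R : idomainType.

Definition basisU (j : 'I_4) : 'I_4 -> R := fun k => (k == j)%:R.

(* An element of D_i U^* is recorded by its values on the monomials of
   degree i of Sym_i U (divided-power monomials are the dual basis). *)
Definition phi3 (a d e f h i k m n p : R) : mono -> R := fun mo =>
  let t := expo mo in
  if t == (2,1,0,0)%N then a else
  if t == (1,2,0,0)%N then d else
  if t == (0,2,1,0)%N then e else
  if t == (0,2,0,1)%N then f else
  if t == (0,1,2,0)%N then h else
  if t == (0,0,2,1)%N then i else
  if t == (0,1,0,2)%N then k else
  if t == (1,1,1,0)%N then m else
  if t == (1,1,0,1)%N then n else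
  if t == (0,1,1,1)%N then p else 0.

(* Module action of U = Sym_1 U on D U^*: (l v)(u') = v(l u'). *)
Definition contract (l : 'I_4 -> R) (phi : mono -> R) : mono -> R :=
  fun mo => \sum_(j < 4) l j * phi (maddm mo (unitm j)).

Definition content (s : {ffun 'I_4 -> 'I_4}) : mono :=
  fun j => #|[set r | s r == j]|.

(* Gamma_phi (X (x) y_1 /\ ... /\ y_4), with X in D_4 U given by its
   coordinates c on the divided-power monomial basis x^(a1)y^(a2)z^(a3)w^(a4),
   and wedge^4 U^* identified with P_0 via x^* /\ y^* /\ z^* /\ w^* |-> 1.
   Delta(x^(a1)...w^(a4)) is the sum of the words of content (a1,..,a4). *)
Definition Gamma (phi : mono -> R) (c : mono -> R) (ys : 'I_4 -> 'I_4 -> R) : R :=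
  \sum_(s : {ffun 'I_4 -> 'I_4})
     c (content s) *
     \det (\matrix_(r < 4, col < 4)
             contract (basisU (s r)) (contract (ys r) phi) (unitm col)).
End Forms.

From mathcomp Require Import all_boot all_algebra ring.
Set Implicit Arguments.
Unset Strict Implicit.
Unset Printing Implicit Defensive.
Import GRing.Theory.
Local Open Scope ring_scope.

(* Evaluate Gamma_phi3 on X (x) x/\y/\z/\w for the three divided-power monomials
   X = x^(2)z^(2), x^(2)y^(2) and y^(4).  With A = ah - m^2, B = ap - mn,
   C = ak - n^2, P = ae - dm and Q = af - dn the values are a^2 i^2, B^2 - AC and
   a^-2 (d^2 (B^2 - AC) - (C P^2 - 2 B P Q + A Q^2)).  If all three vanish then
   i = 0, the symmetric matrix [[A, B], [B, C]] is singular and its adjugate form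
   vanishes at (P, Q), so [[A, B], [B, C], [P, Q]] has a nonzero kernel vector
   (l2, l3).  Then l = -(m l2 + n l3) x + a l2 z + a l3 w is nonzero and
   annihilates phi3, against hypothesis (b). *)

Notation X := (@Ordinal 4 0 isT).
Notation Y := (@Ordinal 4 1 isT).
Notation Z := (@Ordinal 4 2 isT).
Notation W := (@Ordinal 4 3 isT).

Definition ord4 (k : nat) : 'I_4 :=
  match k with 0 => X | 1 => Y | 2 => Z | _ => W end%N.

Lemma ord4_val (u : 'I_4) : ord4 u = u.
Proof. by apply: val_inj; case: u => [[|[|[|[|]]]] ?]. Qed.

Lemma big_ord4 (T : Type) (idx : T) (op : Monoid.law idx) (F : 'I_4 -> T) :
  \big[op/idx]_(j < 4) F j = op (F X) (op (F Y) (op (F Z) (F W))).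
Proof.
rewrite !big_ord_recl big_ord0 Monoid.mulm1.
by congr (op (F _) (op (F _) (op (F _) (F _)))); apply: val_inj.
Qed.

Section NatIndexedDeterminant.
Variable R : comNzRingType.

(* Indexing the entries by nat rather than by ordinals lets simpl evaluate
   det_laplace on concrete matrices. *)
Definition mx_nat n (E : nat -> nat -> R) : 'M[R]_n := \matrix_(r, c) E r c.

Lemma expand_det_mx_nat n (E : nat -> nat -> R) : \det (mx_nat n.+1 E) =
  \sum_(j < n.+1) (-1) ^+ j * E 0%N j * \det (mx_nat n (fun r c => E r.+1 (bump j c))).
Proof.
rewrite (expand_det_row _ ord0); apply: eq_bigr => j _.
rewrite /cofactor !mxE add0n mulrCA mulrA; congr (_ * \det _).
by apply/matrixP => r c; rewrite !mxE.
Qed.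

Fixpoint det_laplace n (E : nat -> nat -> R) : R :=
  if n is n'.+1 then
    foldr (fun j acc => (-1) ^+ j * E 0%N j * det_laplace n' (fun r c => E r.+1 (bump j c)) + acc)
      0 (iota 0 n)
  else 1.

Lemma det_mx_nat n (E : nat -> nat -> R) : \det (mx_nat n E) = det_laplace n E.
Proof.
elim: n E => [|n IHn] E; first exact: det_mx00.
rewrite expand_det_mx_nat; under eq_bigr => j _ do rewrite IHn.
rewrite -(big_mkord xpredT
  (fun j => (-1) ^+ j * E 0%N j * det_laplace n (fun r c => E r.+1 (bump j c)))).
by rewrite unlock /index_iota subn0.
Qed.

End NatIndexedDeterminant.

(* An explicit alphabet: Finite.enum 'I_4 does not reduce under vm_compute. *)
Definition letters : seq 'I_4 := [:: X; Y; Z; W].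

Lemma mem_letters u : u \in letters.
Proof. by rewrite -(ord4_val u); case: (nat_of_ord u) => [|[|[|?]]]. Qed.

Definition word n (w : seq 'I_4) : {ffun 'I_n -> 'I_4} := [ffun r : 'I_n => nth X w r].

Fixpoint words n : seq (seq 'I_4) :=
  if n is n'.+1 then [seq u :: w | u <- letters, w <- words n'] else [:: [::]].

Lemma mem_words n w : (w \in words n) = (size w == n).
Proof.
elim: n w => [|n IHn] w; first by case: w.
apply/allpairsP/idP => [[[u w'] /= [_ w'_n ->]]|]; first by rewrite /= eqSS -IHn.
by case: w => [|u w] //=; rewrite eqSS -IHn => w_n; exists (u, w); rewrite mem_letters.
Qed.

Lemma uniq_words n : uniq (words n).
Proof.
elim: n => [//|n IHn]; apply: allpairs_uniq => //.
by move=> [u w] [v w'] _ _ /= [-> ->].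
Qed.

Lemma codom_word n w : size w = n -> codom (word n w) = w.
Proof.
move=> w_n; apply: (@eq_from_nth _ X); first by rewrite size_codom card_ord.
move=> j; rewrite size_codom card_ord => j_n.
by rewrite codomE (nth_map (Ordinal j_n)) ?size_enum_ord // ffunE nth_enum_ord.
Qed.

Lemma word_codom n (s : {ffun 'I_n -> 'I_4}) : word n (codom s) = s.
Proof.
apply/ffunP => r; rewrite ffunE codomE (nth_map r) ?size_enum_ord //.
by rewrite (nth_ord_enum r).
Qed.

Lemma sum_ffun_words (R : nmodType) n (F : {ffun 'I_n -> 'I_4} -> R) :
  \sum_s F s = \sum_(w <- words n) F (word n w).
Proof.
rewrite -(big_map (word n) xpredT); apply: perm_big.
rewrite perm_sym uniq_perm ?index_enum_uniq //.
  rewrite map_inj_in_uniq ?uniq_words // => w w' /[!mem_words] /eqP w_n /eqP w'_n eq_w.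
  by rewrite -(codom_word w_n) -(codom_word w'_n) eq_w.
move=> s; rewrite mem_index_enum; apply/mapP; exists (codom s); last by rewrite word_codom.
by rewrite mem_words size_codom card_ord.
Qed.

Lemma content_codom (s : {ffun 'I_4 -> 'I_4}) j : content s j = count_mem j (codom s).
Proof. by rewrite /content cardsE codomE count_map enumT cardE /enum_mem size_filter. Qed.

Definition words_of_content (al : nat * nat * nat * nat) : seq (seq 'I_4) :=
  [seq w <- words 4 | expo (fun j => count_mem j w) == al].

Lemma sum_content (R : nmodType) (F : {ffun 'I_4 -> 'I_4} -> R) al :
  \sum_(s | expo (content s) == al) F s = \sum_(w <- words_of_content al) F (word 4 w).
Proof.
rewrite big_mkcond sum_ffun_words big_filter [RHS]big_mkcond.
apply: eq_big_seq => w; rewrite mem_words => /eqP w4.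
by rewrite /expo !content_codom codom_word.
Qed.

Section Gamma.
Variable R : idomainType.

Definition dpmono (al : nat * nat * nat * nat) : mono -> R := fun mo => (expo mo == al)%:R.

Lemma contract_basisU u (psi : mono -> R) mo :
  contract (basisU R u) psi mo = psi (maddm mo (unitm u)).
Proof.
rewrite /contract (bigD1 u) //= big1 => [|j /negbTE j_u]; rewrite /basisU ?eqxx ?j_u.
  by rewrite mul1r addr0.
by rewrite mul0r.
Qed.

Lemma Gamma_dpmono phi al : Gamma phi (dpmono al) (basisU R) =
  \sum_(w <- words_of_content al)
    \det (mx_nat 4 (fun r c =>
      phi (maddm (maddm (unitm (ord4 c)) (unitm (nth X w r))) (unitm (ord4 r))))).
Proof.
rewrite /Gamma; under eq_bigr => s _ do rewrite /dpmono mulr_natl mulrb.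
rewrite -big_mkcond sum_content; apply: eq_bigr => w _; congr (\det _).
by apply/matrixP => r c; rewrite !mxE !contract_basisU !ord4_val ffunE.
Qed.
End Gamma.

Lemma sym2_degenerate_kernel (R : idomainType) (A B C P Q : R) :
  A * C = B ^+ 2 -> C * P ^+ 2 - 2 * B * P * Q + A * Q ^+ 2 = 0 ->
  exists l2 l3 : R, [/\ (l2 != 0) || (l3 != 0),
    A * l2 + B * l3 = 0, B * l2 + C * l3 = 0 & P * l2 + Q * l3 = 0].
Proof.
move=> detABC quadPQ; have [A0|A_neq0] := eqVneq A 0.
  have B0 : B = 0 by apply/eqP; move: detABC; rewrite A0 mul0r => /esym/eqP; rewrite expf_eq0.
  have [P0|P_neq0] := eqVneq P 0.
    by exists 1, 0; rewrite oner_eq0 A0 B0 P0; split => //; ring.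
  have C0 : C = 0.
    have /eqP : C * P ^+ 2 = 0 by rewrite -quadPQ A0 B0; ring.
    by rewrite mulf_eq0 expf_eq0 (negbTE P_neq0) orbF => /eqP.
  by exists Q, (- P); rewrite oppr_eq0 P_neq0 orbT A0 B0 C0; split => //; ring.
have sq0 : (P * B - Q * A) ^+ 2 = 0.
  transitivity (A * (C * P ^+ 2 - 2 * B * P * Q + A * Q ^+ 2) - (A * C - B ^+ 2) * P ^+ 2).
    ring.
  by rewrite quadPQ detABC subrr mulr0 mul0r subrr.
exists B, (- A); rewrite oppr_eq0 A_neq0 orbT; split => //; first ring.
- by transitivity (B ^+ 2 - A * C); [ring | rewrite detABC subrr].
- by move/eqP: sq0; rewrite expf_eq0 /= => /eqP <-; ring.
Qed.

Section Phi3.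
Variables (R : idomainType) (a d e f h i k m n p : R).
Local Notation phi := (phi3 a d e f h i k m n p).
Local Notation A := (a * h - m ^+ 2).
Local Notation B := (a * p - m * n).
Local Notation C := (a * k - n ^+ 2).
Local Notation P := (a * e - d * m).
Local Notation Q := (a * f - d * n).

Lemma contract_phi3_eq0 (x z w : R) : i = 0 ->
  a * x + m * z + n * w = 0 -> m * x + h * z + p * w = 0 ->
  n * x + p * z + k * w = 0 -> d * x + e * z + f * w = 0 ->
  forall mo, mdeg mo = 2%N -> contract (fun j : 'I_4 => [:: x; 0; z; w]`_j) phi mo = 0.
Proof.
move=> i0 E_xy E_yz E_yw E_yy mo.
rewrite /mdeg /contract !big_ord4 /= /phi3 /expo /maddm /unitm /= i0.
case: (mo X) (mo Y) (mo Z) (mo W) => [|[|[|?]]] [|[|[|?]]] [|[|[|?]]] [|[|[|?]]] /eqP //= _;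
  first [ring | apply: etrans _ E_xy; ring | apply: etrans _ E_yz; ring
        | apply: etrans _ E_yw; ring | apply: etrans _ E_yy; ring].
Qed.

Ltac Gamma_by_words :=
  rewrite Gamma_dpmono; under eq_bigr => w _ do rewrite det_mx_nat;
  vm_compute (words_of_content _);
  rewrite !big_cons big_nil /phi3 /expo /maddm /unitm /=.

Lemma Gamma_x2z2 : Gamma phi (dpmono R (2, 0, 2, 0)%N) (basisU R) = a ^+ 2 * i ^+ 2.
Proof. by Gamma_by_words; ring. Qed.

Lemma Gamma_x2y2 : Gamma phi (dpmono R (2, 2, 0, 0)%N) (basisU R) = B ^+ 2 - A * C.
Proof. by Gamma_by_words; ring. Qed.

Lemma Gamma_y4 : a ^+ 2 * Gamma phi (dpmono R (0, 4, 0, 0)%N) (basisU R) =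
  d ^+ 2 * (B ^+ 2 - A * C) - (C * P ^+ 2 - 2 * B * P * Q + A * Q ^+ 2).
Proof. by Gamma_by_words; ring. Qed.

Lemma phi3_degenerate : a != 0 -> i = 0 ->
  Gamma phi (dpmono R (2, 2, 0, 0)%N) (basisU R) = 0 ->
  Gamma phi (dpmono R (0, 4, 0, 0)%N) (basisU R) = 0 ->
  exists2 l : 'I_4 -> R, exists j, l j != 0 & forall mo, mdeg mo = 2%N -> contract l phi mo = 0.
Proof.
move=> a_neq0 i0 x2y2_0 y4_0.
have detABC : A * C = B ^+ 2.
  by apply/eqP; rewrite eq_sym -subr_eq0 -Gamma_x2y2 x2y2_0.
have quadPQ : C * P ^+ 2 - 2 * B * P * Q + A * Q ^+ 2 = 0.
  move: Gamma_y4; rewrite y4_0 mulr0 -Gamma_x2y2 x2y2_0 mulr0 sub0r.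
  by move=> /esym/eqP; rewrite oppr_eq0 => /eqP.
have [l2 [l3 [l_neq0 E_yz E_yw E_yy]]] := sym2_degenerate_kernel detABC quadPQ.
exists (fun j : 'I_4 => [:: - (m * l2 + n * l3); 0; a * l2; a * l3]`_j).
  by case/orP: l_neq0 => ?; [exists Z | exists W]; rewrite /= mulf_neq0.
apply: contract_phi3_eq0 => //; first ring.
- by apply: etrans _ E_yz; ring.
- by apply: etrans _ E_yw; ring.
- by apply: etrans _ E_yy; ring.
Qed.
End Phi3.

Theorem proposition7p1 (R : idomainType) (a d e f h i k m n p : R) :
  a != 0 ->
  (forall l : 'I_4 -> R, (exists j, l j != 0) ->
     exists mo : mono, mdeg mo = 2%N /\ contract l (phi3 a d e f h i k m n p) mo != 0) ->
  exists (c : mono -> R) (ys : 'I_4 -> 'I_4 -> R),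
    Gamma (phi3 a d e f h i k m n p) c ys != 0.
Proof.
move=> a_neq0 nondegenerate.
pose G al := Gamma (phi3 a d e f h i k m n p) (dpmono R al) (basisU R).
have [i0|i_neq0] := eqVneq i 0; last first.
  by exists (dpmono R (2, 0, 2, 0)%N), (basisU R); rewrite Gamma_x2z2 mulf_neq0 ?expf_neq0.
have [x2y2_0|] := eqVneq (G (2, 2, 0, 0)%N) 0; last by exists (dpmono R (2, 2, 0, 0)%N), (basisU R).
have [y4_0|] := eqVneq (G (0, 4, 0, 0)%N) 0; last by exists (dpmono R (0, 4, 0, 0)%N), (basisU R).
have [l l_neq0 l_phi3] := phi3_degenerate a_neq0 i0 x2y2_0 y4_0.
have [mo [mo2]] := nondegenerate l l_neq0.
by rewrite l_phi3 ?eqxx.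
Qed.
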